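(* For every integer $n\ge2$, $R^p(n)\le \frac1n\cot\!\left(\frac{\pi}{2n}\right)$ (which is $<\tfrac{2}{\pi}$).
   Context: A qubit POVM is a finite family $\{\Pi_i\}_{i=1}^n$ of positive semidefinite operators summing to $\mathbb{I}$; it simulates $\{M_{a|x}\}$ if $M_{a|x}=\sum_i p(a|x,i)\Pi_i$ with $p(a|x,i)\ge0$, $\sum_a p(a|x,i)=1$. $\mathcal{P}^p_r$ is the family of two-outcome POVMs $\{\tfrac12(\mathbb{I}\pm r\hat n\cdot\vec\sigma)\}$ over all unit vectors $\hat n=(n_x,0,n_z)$. $R^p(n)$ is the supremum of $r$ such that some $n$-outcome qubit POVM simulates $\mathcal{P}^p_r$. *)

From HB Require Import structures.
From mathcomp Require Import all_boot all_order all_algebra.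
From mathcomp Require Import complex.
From mathcomp Require Import all_classical all_reals all_analysis.

Set Implicit Arguments.
Unset Strict Implicit.
Unset Printing Implicit Defensive.

Import Order.TTheory GRing.Theory Num.Theory.
Local Open Scope ring_scope.
Local Open Scope complex_scope.

Section Qubit.
Variable R : realType.

Definition qop := 'M[R[i]]_2.

(* Positive semidefinite: <v, A v> >= 0 for all v in C^2
   (0 <= z in R[i] means z is real and nonnegative). *)
Definition psd (A : qop) : Prop :=
  forall v : 'cV[R[i]]_2, 0 <= ((map_mx conjc v)^T *m A *m v) 0 0.

Definition povm (n : nat) (Pi : 'I_n -> qop) : Prop :=
  (forall i, psd (Pi i)) /\ \sum_(i < n) Pi i = 1%:M.

Definition sigma_x : qop := \matrix_(i < 2, j < 2) (if i == j then 0 else 1).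
Definition sigma_z : qop :=
  \matrix_(i < 2, j < 2) (if i == j then (if i == 0 :> 'I_2 then 1 else -1) else 0).

(* The element of P^p_r for the unit vector (nx, 0, nz), outcome a (true = +, false = -):
   1/2 (I +- r (nx sigma_x + nz sigma_z)). *)
Definition Pmeas (r nx nz : R) (a : bool) : qop :=
  (1 / 2)%:C *: (1%:M + ((if a then 1 else -1) * r)%:C *:
                          (nx%:C *: sigma_x + nz%:C *: sigma_z)).

Definition simulates_Pp (n : nat) (r : R) : Prop :=
  exists Pi : 'I_n -> qop, povm Pi /\
    forall nx nz : R, nx ^+ 2 + nz ^+ 2 = 1 ->
      exists p : bool -> 'I_n -> R,
        (forall a i, 0 <= p a i) /\
        (forall i, p true i + p false i = 1) /\
        (forall a, Pmeas r nx nz a = \sum_(i < n) (p a i)%:C *: Pi i).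

Definition Rp (n : nat) : \bar R :=
  ereal_sup [set (r%:E)%E | r in [set r | simulates_Pp n r]].

End Qubit.

From HB Require Import structures.
From mathcomp Require Import all_boot all_order all_algebra.
From mathcomp Require Import complex.
From mathcomp Require Import all_classical all_reals all_analysis.
From mathcomp Require Import ring lra zify.

Import Order.TTheory GRing.Theory Num.Theory.
Import numFieldNormedType.Exports.
Local Open Scope ring_scope.

(* Let {Pi_i} be an n-outcome qubit POVM simulating P^p_r, and write b_i for
   the (x, z)-part of the Bloch vector of Pi_i and t_i for its half trace.
   Positivity gives |b_i| <= t_i, and sum_i t_i = 1.  For every unit vector
   u = (nx, nz), subtracting the two simulated effects of direction u and
   taking their u-component gives r = sum_i (p(+|i) - p(-|i)) <u, b_i>, so
   r <= sum_i |<u, b_i>|.  The heart of the proof is the planar estimate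
   (direction_bound): some unit vector u achieves
   sum_i |<u, b_i>| <= (1/n) cot (pi / (2n)) sum_i |b_i|.

   To prove it, list the lines R b_i by angle and close the list into a chain
   psi_0 <= ... <= psi_n = psi_0 + pi (section ClosedAngleChain).  Weighting
   each gap by the tangent of its half, the |sin|-distances seen from the two
   ends of the gaps telescope to a constant (chord_telescope); Jensen's
   inequality for tan bounds the sum of the weights from below by
   n tan (pi / (2n)); hence some angle of the chain is a good direction. *)

Section TrigInequalities.
Context {R : realType}.
Implicit Types a d e x u v : R.
Local Open Scope classical_set_scope.

Lemma derivable_within_continuous {f df : R -> R} (a b : R) :
  (forall x, is_derive x 1 f (df x)) -> {within `[a, b], continuous f}.
Proof.
move=> fdf; apply: continuous_subspaceT => x.
by case: (fdf x) => /derivable1_diffP/differentiable_continuous.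
Qed.

Lemma sin_le_id e : 0 <= e -> sin e <= e.
Proof.
rewrite le_eqVlt => /predU1P[<-|e_gt0]; first by rewrite sin0.
have dF x : is_derive x 1 (fun y : R => y - sin y) (1 - cos x) by apply: is_deriveB.
have [c _] := MVT e_gt0 (fun x _ => dF x) (derivable_within_continuous _ _ dF).
rewrite sin0 !subr0 => mvt.
by rewrite -subr_ge0 mvt mulr_ge0 ?subr_ge0 ?cos_le1 ?ltW.
Qed.

(* tan d > d on ]0, pi/2[, in the multiplied-out form d cos d < sin d. *)
Lemma id_cos_lt_sin d : 0 < d < pi / 2 -> d * cos d < sin d.
Proof.
case/andP=> d_gt0 d_lt.
have dF x : is_derive x 1 (fun y : R => sin y - y * cos y) (x * sin x).
  have dF' : is_derive x (1:R) ((sin : R -> R) - (id : R -> R) * (cos : R -> R))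
      (cos x - (x *: - sin x + cos x *: 1)) by apply: is_deriveB.
  by apply: is_derive_eq dF' _; rewrite /GRing.scale /=; lra.
have [c] := MVT d_gt0 (fun x _ => dF x) (derivable_within_continuous _ _ dF).
rewrite in_itv /= sin0 !mul0r !subr0 => /andP[c_gt0 c_lt] mvt.
by rewrite -subr_gt0 mvt !mulr_gt0 // sin_gt0_pihalf // c_gt0 (lt_trans c_lt).
Qed.

Lemma id_cos_le_sin d : 0 <= d < pi / 2 -> d * cos d <= sin d.
Proof.
case/andP; rewrite le_eqVlt => /predU1P[<- _|d_gt0 d_lt]; first by rewrite sin0 mul0r.
by rewrite ltW // id_cos_lt_sin // d_gt0.
Qed.

(* The tangent line of tan at a lies below tan on [0, pi/2[, stated before
   division by cos x and cos a ^+ 2 (convexity of tan on that interval). *)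
Lemma tan_tangent_cross a x : 0 < a < pi / 2 -> 0 <= x < pi / 2 ->
  (x - a) * cos x <= cos a * sin (x - a).
Proof.
move=> /andP[a_gt0 a_lt] /andP[x_ge0 x_lt]; have pi_gt0 := pi_gt0 R.
have ca : 0 <= cos a by rewrite cos_ge0_pihalf //; lra.
have cx : 0 <= cos x by rewrite cos_ge0_pihalf //; lra.
have sa : 0 <= sin a by rewrite sin_ge0_pi //; lra.
have sx : 0 <= sin x by rewrite sin_ge0_pi //; lra.
case: (lerP 0 (x - a)) => [d_ge0|d_lt0].
  (* x >= a: expand cos x = cos (a + (x - a)) and use tan (x - a) >= x - a. *)
  have tan_d : (x - a) * cos (x - a) <= sin (x - a).
    by apply: id_cos_le_sin; rewrite d_ge0 /=; lra.
  have sd : 0 <= sin (x - a) by rewrite sin_ge0_pi //; lra.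
  have -> : cos x = cos a * cos (x - a) - sin a * sin (x - a).
    by rewrite -cosD addrC subrK.
  have h1 : 0 <= cos a * (sin (x - a) - (x - a) * cos (x - a)).
    by rewrite mulr_ge0 // subr_ge0.
  have h2 : 0 <= (x - a) * sin a * sin (x - a) by rewrite !mulr_ge0.
  nra.
(* x < a: expand cos a = cos (x + (a - x)) and use sin (a - x) <= a - x. *)
set e := a - x; have e_ge0 : 0 <= e by rewrite /e; lra.
have -> : x - a = - e by rewrite /e opprB.
have se := sin_le_id _ e_ge0; have ce := cos_le1 e.
have se0 : 0 <= sin e by rewrite sin_ge0_pi // e_ge0 /e; lra.
have -> : cos a = cos x * cos e - sin x * sin e by rewrite -cosD /e addrC subrK.
have h1 : 0 <= cos x * (e - cos e * sin e).
  by rewrite mulr_ge0 // subr_ge0 (le_trans _ se) // ler_piMl.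
have h2 : 0 <= sin x * sin e * sin e by rewrite !mulr_ge0.
rewrite sinN; nra.
Qed.

Lemma tan_tangent_line a x : 0 < a < pi / 2 -> 0 <= x < pi / 2 ->
  tan a + (x - a) / cos a ^+ 2 <= tan x.
Proof.
move=> ha hx; have := tan_tangent_cross _ _ ha hx; rewrite sinB.
move: ha hx => /andP[a_gt0 a_lt] /andP[x_ge0 x_lt]; have pi_gt0 := pi_gt0 R.
have ca : 0 < cos a by rewrite cos_gt0_pihalf //; lra.
have cx : 0 < cos x by rewrite cos_gt0_pihalf //; lra.
move=> cross; rewrite /tan -subr_ge0.
have -> : sin x / cos x - (sin a / cos a + (x - a) / cos a ^+ 2) =
    (cos a * (sin x * cos a - cos x * sin a) - (x - a) * cos x) / (cos x * cos a ^+ 2).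
  by field; rewrite !gt_eqF.
by apply: divr_ge0; rewrite ?subr_ge0 // mulr_ge0 ?sqr_ge0 ?ltW.
Qed.

Lemma tan_sum_ge (n : nat) (x : nat -> R) a : 0 < a < pi / 2 ->
  (forall j, (j < n)%N -> 0 <= x j < pi / 2) ->
  \sum_(0 <= j < n) x j = n%:R * a ->
  n%:R * tan a <= \sum_(0 <= j < n) tan (x j).
Proof.
move=> ha hx xsum.
have tangent j : (0 <= j < n)%N -> tan a + (x j - a) / cos a ^+ 2 <= tan (x j).
  by case/andP=> _ /hx; apply: tan_tangent_line.
apply: le_trans (ler_sum_nat tangent).
rewrite big_split sumr_const_nat subn0 -mulr_suml sumrB xsum sumr_const_nat subn0.
by rewrite /= -(mulr_natl a) subrr mul0r addr0 mulr_natl.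
Qed.

Lemma sinD_tan_half u v : cos ((v - u) / 2) != 0 ->
  (sin u + sin v) * tan ((v - u) / 2) = cos u - cos v.
Proof.
set h := (v - u) / 2; set m := (u + v) / 2 => ch.
have [-> ->] : u = m - h /\ v = m + h by split; rewrite /m /h; field.
by rewrite /tan sinB sinD cosB cosD; field.
Qed.

End TrigInequalities.

Section CotangentBound.
Context {R : realType}.

Definition base_angle (n : nat) : R := pi / (2 * n%:R).

Definition cot_bound (n : nat) : R :=
  (n%:R)^-1 * (cos (base_angle n) / sin (base_angle n)).

Lemma base_angle_bounds {n : nat} : (2 <= n)%N -> 0 < base_angle n < pi / 2.
Proof.
move=> n_ge2; have n2 : (2 : R) <= n%:R by rewrite (ler_nat R 2 n).
have pi_gt0 := pi_gt0 R.
have a_n : base_angle n * (2 * n%:R) = pi by rewrite divfK // gt_eqF //; lra.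
by apply/andP; split; nra.
Qed.

Lemma cos_sin_base_angle_gt0 {n : nat} : (2 <= n)%N ->
  0 < cos (base_angle n) /\ 0 < sin (base_angle n).
Proof.
move=> /base_angle_bounds /andP[a_gt0 a_lt]; have pi_gt0 := pi_gt0 R.
by split; [apply: cos_gt0_pihalf | apply: sin_gt0_pihalf]; apply/andP; split => //; lra.
Qed.

Lemma cot_bound_ge0 {n : nat} : (2 <= n)%N -> 0 <= cot_bound n.
Proof.
move=> /cos_sin_base_angle_gt0 [ca sa].
by rewrite mulr_ge0 ?invr_ge0 // divr_ge0 ?ltW.
Qed.

Lemma cot_bound_tan {n : nat} : (2 <= n)%N ->
  cot_bound n * (n%:R * tan (base_angle n)) = 1.
Proof.
move=> n_ge2; have [ca sa] := cos_sin_base_angle_gt0 n_ge2.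
have n_gt0 : (0 : R) < n%:R by rewrite ltr0n; lia.
by rewrite /cot_bound /tan; field; rewrite ?(gt_eqF ca) ?(gt_eqF sa) ?(gt_eqF n_gt0).
Qed.

(* Since tan a > a, (1/n) cot (pi / (2n)) < (1/n) (2n / pi) = 2 / pi. *)
Lemma cot_bound_lt {n : nat} : (2 <= n)%N -> cot_bound n < 2 / pi.
Proof.
move=> n_ge2; have [ca sa] := cos_sin_base_angle_gt0 n_ge2.
have a_bnd := base_angle_bounds n_ge2; have /andP[a_gt0 _] := a_bnd.
have n_gt0 : (0 : R) < n%:R by rewrite ltr0n; lia.
have -> : 2 / pi = (n%:R)^-1 * (base_angle n)^-1.
  rewrite /base_angle; move: (pi_gt0 R); move: (pi : R) => p p_gt0.
  by field; rewrite (gt_eqF n_gt0) (gt_eqF p_gt0).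
rewrite ltr_pM2l ?invr_gt0 // -subr_gt0.
have -> : (base_angle n)^-1 - cos (base_angle n) / sin (base_angle n) =
    (sin (base_angle n) - base_angle n * cos (base_angle n)) /
    (base_angle n * sin (base_angle n)).
  by field; rewrite (gt_eqF a_gt0) (gt_eqF sa).
apply: divr_gt0; last exact: mulr_gt0.
by rewrite subr_gt0 id_cos_lt_sin.
Qed.

End CotangentBound.

(* Some term of a finite family is at most its t-weighted mean: a term a j
   minimal among a 0, ..., a (n-1) satisfies a j * sum t <= sum a t. *)
Lemma exists_le_weighted_mean {R : realType} {n : nat}
    (a : nat -> R) {t : nat -> R} :
  (0 < n)%N -> (forall j, (j < n)%N -> 0 <= t j) ->
  exists2 j, (j < n)%N &
    a j * \sum_(0 <= i < n) t i <= \sum_(0 <= i < n) a i * t i.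
Proof.
move=> n_gt0 t_ge0; pose j0 : 'I_n := Ordinal n_gt0.
case: (@arg_minP _ _ 'I_n j0 xpredT (fun j : 'I_n => a j) isT) => j _ j_min.
exists j => //; rewrite mulr_sumr !big_mkord; apply: ler_sum => i _.
by rewrite mulrC [X in _ <= X]mulrC ler_wpM2l ?t_ge0 ?j_min.
Qed.

Section ClosedAngleChain.
Context {R : realType}.
Variables (n : nat) (psi : nat -> R).

(* psi 0 <= psi 1 <= ... <= psi n is a chain of angles closed up to a half
   turn (psi n = psi 0 + pi) with all gaps smaller than pi: the directions of
   n lines through the origin, listed by angle. *)
Hypothesis psi_step : forall j, (j < n)%N -> psi j <= psi j.+1.
Hypothesis psi_gap : forall j, (j < n)%N -> psi j.+1 - psi j < pi.
Hypothesis psi_wrap : psi n = psi 0 + pi.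

Lemma psi_le (k l : nat) : (k <= l <= n)%N -> psi k <= psi l.
Proof.
case/andP=> kl ln; rewrite -subr_ge0 -(telescope_sumr _ kl) big_nat_cond.
apply: sumr_ge0 => j /andP[/andP[_ jl] _].
by rewrite subr_ge0 psi_step // (leq_trans jl).
Qed.

Lemma sin_psi_ge0 (i k : nat) : (i <= k <= n)%N -> 0 <= sin (psi k - psi i).
Proof.
case/andP=> ik kn; apply: sin_ge0_pi; rewrite subr_ge0 psi_le ?ik //=.
have := psi_le k n; have := psi_le 0 i; rewrite kn (leq_trans ik kn) leqnn psi_wrap.
by move=> /(_ isT) ? /(_ isT) ?; lra.
Qed.

Lemma sin_psi_le0 (i k : nat) : (k <= i <= n)%N -> sin (psi k - psi i) <= 0.
Proof. by move=> ki; rewrite -opprB sinN oppr_le0 sin_psi_ge0. Qed.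

Lemma cos_half_gap_gt0 (j : nat) : (j < n)%N -> 0 < cos ((psi j.+1 - psi j) / 2).
Proof.
move=> j_lt; have := psi_gap _ j_lt; have := psi_step _ j_lt; have pi_gt0 := pi_gt0 R.
by move=> ? ?; apply: cos_gt0_pihalf; apply/andP; split; lra.
Qed.

Definition half_tan (j : nat) : R := tan ((psi j.+1 - psi j) / 2).

Lemma half_tan_ge0 (j : nat) : (j < n)%N -> 0 <= half_tan j.
Proof.
move=> j_lt; have := psi_gap _ j_lt; have := psi_step _ j_lt; have pi_gt0 := pi_gt0 R.
move=> ? ?; have s_ge0 : 0 <= sin ((psi j.+1 - psi j) / 2).
  by apply: sin_ge0_pi; apply/andP; split; lra.
by rewrite /half_tan /tan divr_ge0 // ltW // cos_half_gap_gt0.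
Qed.

(* The half gaps add up to pi / 2, so Jensen's inequality for tan applies. *)
Lemma half_tan_sum : (2 <= n)%N ->
  n%:R * tan (base_angle n) <= \sum_(0 <= j < n) half_tan j.
Proof.
move=> n_ge2; have pi_gt0 := pi_gt0 R.
apply: tan_sum_ge; first exact: base_angle_bounds.
  move=> j j_lt; have := psi_gap _ j_lt; have := psi_step _ j_lt.
  by move=> ? ?; apply/andP; split; lra.
rewrite -mulr_suml telescope_sumr // psi_wrap /base_angle.
have n_gt0 : (0 : R) < n%:R by rewrite ltr0n; lia.
by field; rewrite gt_eqF.
Qed.

Lemma chord_telescope (i : nat) : (i < n)%N ->
  \sum_(0 <= j < n)
    (`|sin (psi j - psi i)| + `|sin (psi j.+1 - psi i)|) * half_tan j = 2.
Proof.
move=> i_lt.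
pose T k := if (k <= i)%N then cos (psi k - psi i) else 2 - cos (psi k - psi i).
have chord k : (k < n)%N -> (sin (psi k - psi i) + sin (psi k.+1 - psi i)) *
    half_tan k = cos (psi k - psi i) - cos (psi k.+1 - psi i).
  move=> k_lt; have e : psi k.+1 - psi i - (psi k - psi i) = psi k.+1 - psi k.
    by rewrite opprB addrA subrK.
  by rewrite /half_tan -e sinD_tan_half // e gt_eqF ?cos_half_gap_gt0.
rewrite (@telescope_sumr_eq _ _ _ T) // => [|k /andP[_ k_lt]].
  rewrite /T leqNgt i_lt leq0n psi_wrap.
  by rewrite /= [psi 0 + pi - _]addrAC cosDpi; lra.
have [ik|ki] := leqP i k.
  rewrite !ger0_norm ?sin_psi_ge0 ?ik ?(leqW ik) ?(ltnW k_lt) // chord //.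
  rewrite /T ltnNge ik /=; case: ifP => [ki|_]; last by lra.
  have -> : k = i by apply/eqP; rewrite eqn_leq ki ik.
  by rewrite subrr cos0; lra.
rewrite !ler0_norm ?sin_psi_le0 ?ki ?(ltnW ki) ?(ltnW i_lt) //.
by rewrite -opprD mulNr chord // /T ki (ltnW ki); lra.
Qed.

Variable W : nat -> R.
Hypothesis W_ge0 : forall i, (i < n)%N -> 0 <= W i.

Definition sin_dev (k : nat) : R := \sum_(0 <= i < n) W i * `|sin (psi k - psi i)|.

Lemma sin_dev_ge0 (k : nat) : 0 <= sin_dev k.
Proof.
rewrite /sin_dev big_nat_cond; apply: sumr_ge0 => i /andP[/andP[_ i_lt] _].
by rewrite mulr_ge0 ?W_ge0.
Qed.

Lemma sin_dev_wrap : sin_dev n = sin_dev 0.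
Proof.
by apply: eq_bigr => i _; rewrite psi_wrap addrAC sinDpi normrN.
Qed.

Lemma sin_dev_average :
  \sum_(0 <= j < n) (sin_dev j + sin_dev j.+1) * half_tan j =
  2 * \sum_(0 <= i < n) W i.
Proof.
rewrite mulr_sumr.
transitivity (\sum_(0 <= i < n) W i * \sum_(0 <= j < n)
    (`|sin (psi j - psi i)| + `|sin (psi j.+1 - psi i)|) * half_tan j); last first.
  by apply: eq_big_nat => i /andP[_ i_lt]; rewrite chord_telescope // mulrC.
under [RHS]eq_bigr do rewrite mulr_sumr.
rewrite [RHS]exchange_big_nat; apply: eq_bigr => j _.
rewrite /sin_dev -big_split mulr_suml; apply: eq_bigr => i _ /=.
by ring.
Qed.

Lemma sin_dev_small : (2 <= n)%N ->
  exists2 k, (k < n)%N & sin_dev k <= cot_bound n * \sum_(0 <= i < n) W i.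
Proof.
move=> n_ge2; have n_gt0 : (0 < n)%N by lia.
have [j j_lt mean] := exists_le_weighted_mean
  (fun j => sin_dev j + sin_dev j.+1) n_gt0 half_tan_ge0.
rewrite /= sin_dev_average in mean.
set S := \sum_(0 <= i < n) W i in mean *; set c := cot_bound n.
have c_ge0 : 0 <= c := cot_bound_ge0 n_ge2.
have pair : sin_dev j + sin_dev j.+1 <= 2 * (c * S).
  have dev_ge0 : 0 <= sin_dev j + sin_dev j.+1 by rewrite addr_ge0 ?sin_dev_ge0.
  have := ler_wpM2l dev_ge0 (half_tan_sum n_ge2).
  move=> /le_trans /(_ mean) /(ler_wpM2l c_ge0).
  by rewrite mulrCA cot_bound_tan // mulr1 mulrCA.
have [dev_j|dev_j] := lerP (sin_dev j) (c * S); first by exists j.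
have dev_next : sin_dev j.+1 <= c * S by lra.
have [next_lt|next_ge] := ltnP j.+1 n; first by exists j.+1.
exists 0%N => //; rewrite -sin_dev_wrap.
by have <- : j.+1 = n by apply/eqP; rewrite eqn_leq next_ge j_lt.
Qed.

End ClosedAngleChain.

Lemma sorted_directions_bound {R : realType} {n : nat} (phi W : nat -> R) :
  (2 <= n)%N ->
  (forall k, (k < n)%N -> 0 <= phi k < pi) ->
  (forall k, (k < n)%N -> 0 <= W k) ->
  (forall i j, (i <= j < n)%N -> phi i <= phi j) ->
  exists2 j, (j < n)%N & \sum_(0 <= i < n) W i * `|sin (phi j - phi i)| <=
    cot_bound n * \sum_(0 <= i < n) W i.
Proof.
move=> n_ge2 phi_bnd W_ge0 phi_mono; have n_gt0 : (0 < n)%N by lia.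
have [last_le|first_lt] := lerP (phi n.-1) (phi 0).
  (* All the directions coincide. *)
  have phi_eq i : (0 <= i < n)%N -> phi i = phi 0.
    case/andP=> _ i_lt; apply/le_anti/andP; split; last by rewrite phi_mono ?i_lt.
    by apply: le_trans last_le; apply: phi_mono; lia.
  exists 0%N => //; rewrite big_nat_cond big1 => [|i /andP[i_rng _]]; last first.
    by rewrite (phi_eq i i_rng) subrr sin0 normr0 mulr0.
  rewrite mulr_ge0 ?cot_bound_ge0 // big_nat_cond sumr_ge0 // => i.
  by case/andP=> /andP[_ /W_ge0].
(* Close the list into a chain by appending the first direction turned by pi. *)
pose psi k := if (k < n)%N then phi k else phi 0 + pi.
have psi_wrap : psi n = psi 0 + pi by rewrite /psi ltnn n_gt0.
have psi_gap j : (j < n)%N -> psi j <= psi j.+1 /\ psi j.+1 - psi j < pi.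
  move=> j_lt; have := phi_bnd j j_lt; rewrite /psi j_lt.
  case: ltnP => [j1_lt|j1_ge] /andP[? ?].
    have := phi_bnd j.+1 j1_lt; have := phi_mono j j.+1.
    by rewrite leqnSn j1_lt => /(_ isT) ? /andP[? ?]; split; lra.
  have last_j : n.-1 = j by lia.
  rewrite last_j in first_lt.
  by have /andP[? ?] := phi_bnd 0%N n_gt0; split; lra.
have [k k_lt dev_k] := sin_dev_small n psi (fun j hj => (psi_gap j hj).1)
  (fun j hj => (psi_gap j hj).2) psi_wrap _ W_ge0 n_ge2.
exists k => //; apply: le_trans dev_k; rewrite le_eqVlt; apply/orP; left.
by apply/eqP/eq_big_nat => i /andP[_ i_lt]; rewrite /psi k_lt i_lt.
Qed.

Lemma polar_upper {R : realType} (x z : R) : 0 <= z ->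
  exists rho phi : R, [/\ 0 <= phi <= pi, x = rho * cos phi & z = rho * sin phi].
Proof.
move=> z_ge0.
have [w w_ge0 w2] : exists2 w : R, 0 <= w & w ^+ 2 = x ^+ 2 + z ^+ 2.
  exists (Num.sqrt (x ^+ 2 + z ^+ 2)); first exact: sqrtr_ge0.
  by rewrite sqr_sqrtr ?addr_ge0 ?sqr_ge0.
exists w; have [w_le0|w_gt0] := lerP w 0.
  have w0 : w = 0 by apply/le_anti; rewrite w_le0.
  have [-> ->] : x = 0 /\ z = 0 by move: w2; rewrite w0; split; nra.
  by exists 0; rewrite lexx pi_ge0 w0 !mul0r.
have x_w : -1 <= x / w <= 1.
  have : (x / w) ^+ 2 <= 1.
    by rewrite expr_div_n ler_pdivrMr ?exprn_gt0 // mul1r w2 lerDl sqr_ge0.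
  by move=> ?; apply/andP; split; nra.
exists (acos (x / w)); rewrite acos_ge0 // acos_lepi // acosK ?in_itv //= sin_acos //.
split => //; first by rewrite mulrC divfK ?gt_eqF.
have -> : 1 - (x / w) ^+ 2 = (z / w) ^+ 2.
  by rewrite !expr_div_n w2; field; rewrite -w2 gt_eqF // exprn_gt0.
rewrite sqrtr_sqr ger0_norm; first by rewrite mulrC divfK ?gt_eqF.
exact: divr_ge0.
Qed.

Lemma polar_line {R : realType} (x z : R) :
  exists rho phi : R, [/\ 0 <= phi < pi, x = rho * cos phi & z = rho * sin phi].
Proof.
wlog z_ge0 : x z / 0 <= z.
  move=> upper; have [|z_lt0] := lerP 0 z; first exact: upper.
  have mz_ge0 : 0 <= - z by rewrite oppr_ge0 ltW.
  have [rho [phi [phi_bnd ex ez]]] := upper (- x) (- z) mz_ge0.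
  by exists (- rho), phi; split; rewrite // !mulNr -?ex -?ez opprK.
have [rho [phi [/andP[phi_ge0]]]] := polar_upper x z z_ge0.
rewrite le_eqVlt => /predU1P[-> ex ez|phi_lt ex ez].
  exists (- rho), 0; rewrite ex ez cospi sinpi cos0 sin0 lexx pi_gt0 !mulr0.
  by rewrite mulrN1 mulNr mulr1.
by exists rho, phi; rewrite phi_ge0 phi_lt ex ez.
Qed.

Lemma sort_by_angle {R : realType} {n : nat} (phi w : 'I_n -> R) :
  exists Phi W : nat -> R,
    [/\ forall i j, (i <= j < n)%N -> Phi i <= Phi j,
        forall k, (k < n)%N -> exists i, Phi k = phi i /\ W k = w i &
        forall G : R -> R -> R,
          \sum_(i < n) G (phi i) (w i) = \sum_(0 <= k < n) G (Phi k) (W k)].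
Proof.
pose le1 (p q : R * R) := p.1 <= q.1.
pose L := sort le1 [seq (phi i, w i) | i <- enum 'I_n].
have size_L : size L = n by rewrite size_sort size_map size_enum_ord.
have L_sorted : sorted le1 L by apply: sort_sorted => p q; apply: le_total.
exists (fun k => (nth (0, 0) L k).1), (fun k => (nth (0, 0) L k).2); split.
- move=> i j /andP[ij j_lt]; apply: (sorted_leq_nth _ _ (0, 0) L_sorted) => //.
  + by move=> p q r; apply: le_trans.
  + by move=> p; apply: lexx.
  + by rewrite inE size_L (leq_ltn_trans ij).
  + by rewrite inE size_L.
- move=> k k_lt; have : nth (0, 0) L k \in L by rewrite mem_nth ?size_L.
  by rewrite mem_sort => /mapP[i _ ->]; exists i.
- move=> G; transitivity (\sum_(p <- L) G p.1 p.2).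
    rewrite (perm_big [seq (phi i, w i) | i <- enum 'I_n]) ?perm_sort //.
    by rewrite big_map big_enum.
  by rewrite (big_nth (0, 0)) size_L.
Qed.

Lemma direction_bound {R : realType} {n : nat} (x z : 'I_n -> R) : (2 <= n)%N ->
  exists nx nz : R, nx ^+ 2 + nz ^+ 2 = 1 /\
    \sum_(i < n) `|nx * x i + nz * z i| <=
      cot_bound n * \sum_(i < n) Num.sqrt (x i ^+ 2 + z i ^+ 2).
Proof.
move=> n_ge2.
have polar i : exists p : R * R,
    [/\ 0 <= p.2 < pi, x i = p.1 * cos p.2 & z i = p.1 * sin p.2].
  by have [rho [phi polar]] := polar_line (x i) (z i); exists (rho, phi).
have [p p_polar] := choice polar; pose rho i := (p i).1; pose phi i := (p i).2.
have [Phi [W [Phi_mono Phi_from sum_sorted]]] := sort_by_angle phi (fun i => `|rho i|).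
have Phi_bnd k : (k < n)%N -> 0 <= Phi k < pi.
  by move=> /Phi_from [i [-> _]]; case: (p_polar i).
have W_ge0 k : (k < n)%N -> 0 <= W k by move=> /Phi_from [i [_ ->]].
have [j _ bound] := sorted_directions_bound Phi W n_ge2 Phi_bnd W_ge0 Phi_mono.
exists (sin (Phi j)), (- cos (Phi j)); split; first by rewrite sqrrN addrC cos2Dsin2.
have proj i : `|sin (Phi j) * x i + - cos (Phi j) * z i| =
    `|rho i| * `|sin (Phi j - phi i)|.
  by case: (p_polar i) => _ -> ->; rewrite sinB -normrM; congr `|_|; ring.
have len i : Num.sqrt (x i ^+ 2 + z i ^+ 2) = `|rho i|.
  by case: (p_polar i) => _ -> ->; rewrite !exprMn -mulrDr cos2Dsin2 mulr1 sqrtr_sqr.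
under eq_bigr do rewrite proj; under [X in _ <= _ * X]eq_bigr do rewrite len.
rewrite (sum_sorted (fun q w => w * `|sin (Phi j - q)|)) (sum_sorted (fun _ w => w)).
exact: bound.
Qed.

Section QubitOperators.
Context {R : realType}.
Local Open Scope complex_scope.
Local Notation ReC := (@complex.Re R).

(* Real coordinates of a qubit operator along I, sigma_x and sigma_z: for a
   Hermitian M = t I + bx sigma_x + by sigma_y + bz sigma_z these are t, bx, bz. *)
Definition half_trace (M : qop R) : R := (ReC (M 0 0) + ReC (M 1 1)) / 2.
Definition bloch_x (M : qop R) : R := ReC (M 0 1 + M 1 0) / 2.
Definition bloch_z (M : qop R) : R := (ReC (M 0 0) - ReC (M 1 1)) / 2.

Lemma Re_comb_entry (n : nat) (c : 'I_n -> R) (P : 'I_n -> qop R) (j k : 'I_2) :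
  ReC ((\sum_(i < n) (c i)%:C *: P i) j k) = \sum_(i < n) c i * ReC (P i j k).
Proof.
rewrite summxE raddf_sum; apply: eq_bigr => i _; rewrite mxE.
by case: (P i j k) => a b /=; simpc.
Qed.

Lemma half_trace_comb (n : nat) (c : 'I_n -> R) (P : 'I_n -> qop R) :
  half_trace (\sum_(i < n) (c i)%:C *: P i) = \sum_(i < n) c i * half_trace (P i).
Proof.
rewrite /half_trace !Re_comb_entry -big_split mulr_suml.
by apply: eq_bigr => i _; rewrite mulrA mulrDr.
Qed.

Lemma bloch_x_comb (n : nat) (c : 'I_n -> R) (P : 'I_n -> qop R) :
  bloch_x (\sum_(i < n) (c i)%:C *: P i) = \sum_(i < n) c i * bloch_x (P i).
Proof.
rewrite /bloch_x raddfD /= !Re_comb_entry -big_split mulr_suml.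
by apply: eq_bigr => i _; rewrite raddfD /= mulrA mulrDr.
Qed.

Lemma bloch_z_comb (n : nat) (c : 'I_n -> R) (P : 'I_n -> qop R) :
  bloch_z (\sum_(i < n) (c i)%:C *: P i) = \sum_(i < n) c i * bloch_z (P i).
Proof.
rewrite /bloch_z !Re_comb_entry -sumrB mulr_suml.
by apply: eq_bigr => i _; rewrite mulrA mulrBr.
Qed.

Lemma Pmeas_entries (r nx nz : R) (a : bool) :
  let s := (if a then 1 else -1 : R) in
  [/\ ReC (Pmeas r nx nz a 0 0) = (1 + s * r * nz) / 2,
      ReC (Pmeas r nx nz a 1 1) = (1 - s * r * nz) / 2,
      ReC (Pmeas r nx nz a 0 1) = s * r * nx / 2 &
      ReC (Pmeas r nx nz a 1 0) = s * r * nx / 2].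
Proof.
have e10 : (1 == 0 :> 'I_2) = false by [].
have e01 : (0 == 1 :> 'I_2) = false by [].
rewrite /Pmeas /sigma_x /sigma_z; split.
- by rewrite !mxE !eqxx; simpc; rewrite /= mulrC.
- by rewrite !mxE !eqxx e10; simpc; rewrite /= mulrC.
- by rewrite !mxE e01; simpc; rewrite /= mulrC.
- by rewrite !mxE e10; simpc; rewrite /= mulrC.
Qed.

Lemma bloch_Pmeas (r nx nz : R) (a : bool) :
  bloch_x (Pmeas r nx nz a) = (if a then 1 else -1) * r * nx / 2 /\
  bloch_z (Pmeas r nx nz a) = (if a then 1 else -1) * r * nz / 2.
Proof.
have [P00 P11 P01 P10] := Pmeas_entries r nx nz a.
rewrite /bloch_x /bloch_z raddfD /= P00 P11 P01 P10.
by move: (if a then _ else _) => s; split; field.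
Qed.

Lemma Re_quadratic_form (M : qop R) (s t : R) :
  let v : 'cV[R[i]]_2 := \col_(i < 2) (if i == 0 :> 'I_2 then s%:C else t%:C) in
  ReC (((map_mx conjc v)^T *m M *m v) 0 0) =
    s ^+ 2 * ReC (M 0 0) + s * t * ReC (M 0 1 + M 1 0) + t ^+ 2 * ReC (M 1 1).
Proof.
move=> v; rewrite !mxE !big_ord_recr !big_ord0 /= !mxE.
rewrite !big_ord_recr !big_ord0 /= !mxE /=.
have -> : widen_ord (m:=2) (leqnSn 1) ord_max = 0 :> 'I_2 by apply/val_inj.
have -> : (ord_max : 'I_2) = 1 by apply/val_inj.
move: (M 0 0) (M 0 1) (M 1 0) (M 1 1) => [a1 b1] [a2 b2] [a3 b3] [a4 b4].
by simpc; rewrite /=; ring.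
Qed.

Lemma psd_bloch_bound (M : qop R) : psd M ->
  Num.sqrt (bloch_x M ^+ 2 + bloch_z M ^+ 2) <= half_trace M.
Proof.
move=> M_psd; rewrite /bloch_x /bloch_z /half_trace.
set a := ReC (M 0 0); set d := ReC (M 1 1); set b := ReC (M 0 1 + M 1 0).
have Q s t : 0 <= s ^+ 2 * a + s * t * b + t ^+ 2 * d.
  have := M_psd (\col_(i < 2) (if i == 0 :> 'I_2 then s%:C else t%:C)).
  by rewrite lecE => /andP[_]; rewrite Re_quadratic_form.
have a_ge0 : 0 <= a by have := Q 1 0; lra.
have d_ge0 : 0 <= d by have := Q 0 1; lra.
(* The determinant condition, from the form at (b, -2a), (2d, -b), (1, -b). *)
have det_ge0 : b ^+ 2 <= 4 * (a * d).
  have := Q b (- (2 * a)); have := Q (2 * d) (- b).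
  have [ad_gt0|ad_le0] := ltrP 0 (a + d); first by nra.
  have [-> ->] : a = 0 /\ d = 0 by split; lra.
  by have := Q 1 (- b); nra.
have tr_ge0 : 0 <= (a + d) / 2 by lra.
by rewrite -(ger0_norm tr_ge0) -sqrtr_sqr ler_wsqrtr //; nra.
Qed.

Lemma simulation_bound (n : nat) (r : R) : (2 <= n)%N ->
  simulates_Pp n r -> r <= cot_bound n.
Proof.
move=> n_ge2 [Pi [[Pi_psd Pi_sum] sim]].
have [nx [nz [n_unit proj_bound]]] :=
  direction_bound (fun i => bloch_x (Pi i)) (fun i => bloch_z (Pi i)) n_ge2.
have [p [p_ge0 [p_sum p_eq]]] := sim nx nz n_unit.
pose q i := p true i - p false i.
have along_x : r * nx = \sum_(i < n) q i * bloch_x (Pi i).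
  have [[+ _] [+ _]] := (bloch_Pmeas r nx nz true, bloch_Pmeas r nx nz false).
  rewrite (p_eq true) (p_eq false) !bloch_x_comb => pt pf.
  by under eq_bigr do rewrite mulrBl; rewrite sumrB pt pf; lra.
have along_z : r * nz = \sum_(i < n) q i * bloch_z (Pi i).
  have [[_ +] [_ +]] := (bloch_Pmeas r nx nz true, bloch_Pmeas r nx nz false).
  rewrite (p_eq true) (p_eq false) !bloch_z_comb => pt pf.
  by under eq_bigr do rewrite mulrBl; rewrite sumrB pt pf; lra.
have r_eq : r = \sum_(i < n) q i * (nx * bloch_x (Pi i) + nz * bloch_z (Pi i)).
  transitivity (nx * (r * nx) + nz * (r * nz)).
    by rewrite -[LHS]mulr1 -n_unit; ring.
  rewrite along_x along_z !mulr_sumr -big_split; apply: eq_bigr => i _ /=; ring.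
have q_le1 i : `|q i| <= 1.
  have := p_ge0 true i; have := p_ge0 false i; have := p_sum i.
  by rewrite ler_norml /q => ? ? ?; apply/andP; split; lra.
have trace_sum : \sum_(i < n) half_trace (Pi i) = 1.
  transitivity (half_trace (\sum_(i < n) 1%:C *: Pi i)).
    by rewrite half_trace_comb; apply: eq_bigr => i _; rewrite mul1r.
  under eq_bigr do rewrite scale1r.
  by rewrite Pi_sum /half_trace !mxE /=; lra.
rewrite r_eq; apply: le_trans (le_trans proj_bound _).
  apply: ler_sum => i _; apply: le_trans (ler_norm _) _.
  by rewrite normrM ler_piMl.
rewrite -[leRHS]mulr1 -trace_sum ler_wpM2l ?cot_bound_ge0 //.
by apply: ler_sum => i _; apply: psd_bloch_bound.
Qed.

End QubitOperators.

Theorem proposition4 (R : realType) (n : nat) (hn : (2 <= n)%N) :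
  (Rp R n <= ((n%:R)^-1 * (cos (pi / (2 * n%:R)) / sin (pi / (2 * n%:R))))%:E)%E /\
  (n%:R)^-1 * (cos (pi / (2 * n%:R)) / sin (pi / (2 * n%:R))) < 2 / (pi : R).
Proof.
split; last exact: cot_bound_lt.
apply: ge_ereal_sup => _ [r r_sim <-]; rewrite lee_fin.
exact: simulation_bound.
Qed.
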